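(* Let $R$ be a representation of $\mathbf{Q}$ with dimension vector $(1,4,1)$ which is either globally surjective but not locally injective, or globally injective but not locally surjective. Then for no $(\alpha,\gamma)\in\mathbb{R}^2$ is $R$ $\theta$-stable, where $\theta=(\alpha,-(\alpha+\gamma)/4,\gamma)$.
   Context: The quiver $\mathbf{Q}$ has vertices $-1,0,1$, arrows $\eta_0,\dots,\eta_3:-1\to0$, $\phi_0,\dots,\phi_3:0\to1$ and relations $\phi_i\eta_j+\phi_j\eta_i=0$; a representation consists of vector spaces $V_{-1},V_0,V_1$ and linear maps $f_i:V_{-1}\to V_0$, $g_i:V_0\to V_1$ with $g_if_j+g_jf_i=0$. $R$ is globally injective (resp. surjective) if $\sum\lambda_if_i$ is injective (resp. $\sum\lambda_ig_i$ surjective) for all $\lambda\in\mathbb{C}^4\setminus\{0\}$; locally injective (resp. surjective) if this holds for all $[\lambda]\in\mathbb{P}^3$ outside a closed subset of codimension at least 2. $R$ is $\theta$-stable if $\theta\cdot\dim R=0$ and $\theta\cdot\dim S<0$ for every nonzero proper subrepresentation $S$. *)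

From HB Require Import structures.
From mathcomp Require Import all_boot all_order all_algebra.
From mathcomp Require Import complex.
From mathcomp Require Import Rstruct.
From mathcomp Require Import mpoly.
Set Implicit Arguments.
Unset Strict Implicit.
Unset Printing Implicit Defensive.
Import Order.TTheory GRing.Theory Num.Theory.
Local Open Scope ring_scope.

Notation RR := Rdefinitions.R.
Notation CC := (complex Rdefinitions.R).

(* A representation of Q with dimension vector (1,4,1), in chosen bases
   V_{-1} = C^1, V_0 = C^4, V_1 = C^1.  Vectors are row vectors and linear
   maps act on the right: f_i : V_{-1} -> V_0 is v |-> v *m rf i, and
   g_i : V_0 -> V_1 is w |-> w *m rg i.  Hence g_i o f_j is the matrix
   rf j *m rg i, and the relation g_i f_j + g_j f_i = 0 reads as below. *)
Record rep141 := Rep141 {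
  rf : 'I_4 -> 'M[CC]_(1, 4);
  rg : 'I_4 -> 'M[CC]_(4, 1);
  rrel : forall i j : 'I_4, rf j *m rg i + rf i *m rg j = 0
}.

Definition nonzero4 (lam : 'I_4 -> CC) : Prop := exists i, lam i != 0.

Definition fsum (R : rep141) (lam : 'I_4 -> CC) : 'M[CC]_(1, 4) :=
  \sum_(i < 4) lam i *: rf R i.
Definition gsum (R : rep141) (lam : 'I_4 -> CC) : 'M[CC]_(4, 1) :=
  \sum_(i < 4) lam i *: rg R i.

(* injectivity / surjectivity of v |-> v *m M : row_free / row_full *)
Definition glob_inj (R : rep141) : Prop :=
  forall lam, nonzero4 lam -> row_free (fsum R lam).
Definition glob_surj (R : rep141) : Prop :=
  forall lam, nonzero4 lam -> row_full (gsum R lam).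

(* ---- Subsets of P^3, represented by their (punctured) affine cones: a set
   of nonzero lambda in C^4. ---- *)
Definition pset := ('I_4 -> CC) -> Prop.
Definition pincl (Z1 Z2 : pset) : Prop := forall lam, Z1 lam -> Z2 lam.
Definition psame (Z1 Z2 : pset) : Prop := forall lam, Z1 lam <-> Z2 lam.
Definition pstrict (Z1 Z2 : pset) : Prop := pincl Z1 Z2 /\ ~ pincl Z2 Z1.

Definition proj_closed (Z : pset) : Prop :=
  exists S : {mpoly CC[4]} -> Prop,
    (forall p, S p -> exists d : nat, p \is d.-homog) /\
    forall lam, Z lam <-> (nonzero4 lam /\ forall p, S p -> p.@[lam] = 0).

Definition proj_irred (Z : pset) : Prop :=
  [/\ proj_closed Z, exists lam, Z lam &
      forall Z1 Z2, proj_closed Z1 -> proj_closed Z2 ->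
        (forall lam, Z lam <-> (Z1 lam \/ Z2 lam)) -> psame Z Z1 \/ psame Z Z2].

Definition proj_dim_le (Z : pset) (d : nat) : Prop :=
  ~ exists Y : nat -> pset,
      (forall k, (k <= d.+1)%N -> proj_irred (Y k) /\ pincl (Y k) Z) /\
      (forall k, (k < d.+1)%N -> pstrict (Y k) (Y k.+1)).

(* closed subset of P^3 of codimension >= 2, i.e. dimension <= 3 - 2 = 1 *)
Definition codim_ge2 (Z : pset) : Prop := proj_closed Z /\ proj_dim_le Z 1.

Definition loc_inj (R : rep141) : Prop :=
  exists Z, codim_ge2 Z /\
    forall lam, nonzero4 lam -> ~ Z lam -> row_free (fsum R lam).
Definition loc_surj (R : rep141) : Prop :=
  exists Z, codim_ge2 Z /\
    forall lam, nonzero4 lam -> ~ Z lam -> row_full (gsum R lam).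

Definition theta_dot (th : RR * RR * RR) (d : nat * nat * nat) : RR :=
  th.1.1 * d.1.1%:R + th.1.2 * d.1.2%:R + th.2 * d.2%:R.

Definition is_subrep (R : rep141) (Wm : 'M[CC]_1) (W0 : 'M[CC]_4)
  (Wp : 'M[CC]_1) : Prop :=
  forall i, (Wm *m rf R i <= W0)%MS /\ (W0 *m rg R i <= Wp)%MS.

Definition theta_stable (th : RR * RR * RR) (R : rep141) : Prop :=
  theta_dot th (1, 4, 1)%N = 0 /\
  forall (Wm : 'M[CC]_1) (W0 : 'M[CC]_4) (Wp : 'M[CC]_1),
    is_subrep R Wm W0 Wp ->
    ~ [/\ Wm = 0, W0 = 0 & Wp = 0] ->
    ~ [/\ (1%:M <= Wm)%MS, (1%:M <= W0)%MS & (1%:M <= Wp)%MS] ->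
    theta_dot th (\rank Wm, \rank W0, \rank Wp) < 0.

From HB Require Import structures.
From mathcomp Require Import all_boot all_order all_algebra.
From mathcomp Require Import complex Rstruct mpoly.
From Stdlib Require Import Classical.
From mathcomp Require Import ring lra.
Set Implicit Arguments.
Unset Strict Implicit.
Unset Printing Implicit Defensive.

Import Order.TTheory GRing.Theory Num.Theory.
Local Open Scope ring_scope.

(* Only the failure of local injectivity (resp. surjectivity) matters.  Let F
   (resp. G) be the 4x4 matrix whose rows are the f_i (resp. the g_i).  If
   rank F >= 2, then sum_i lambda_i f_i is injective outside the projectivised
   kernel of F, a point or a line of P^3, so R is locally injective; likewise
   for G.  If rank F <= 1 or rank G <= 1, the relations g_i f_j + g_j f_i = 0
   force g_i f_j = 0 for all i, j, so (V_{-1}, common kernel of the g_i, 0) is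
   a subrepresentation of dimension (1, k, 0).  Its weight
   alpha - k (alpha + gamma) / 4 is positive, since stability against
   (0, 0, V_1) and (0, V_0, V_1) already gives gamma < 0 < alpha. *)

Lemma meval_dhomog_scale (R : comNzRingType) n (h : {mpoly R[n]}) d c
    (x : 'I_n -> R) :
  h \is d.-homog -> h.@[fun i => c * x i] = c ^+ d * h.@[x].
Proof.
move=> /dhomogP hd; rewrite !mevalE big_distrr /=.
apply: eq_big_seq => m /hd <-; rewrite mulrCA; congr (_ * _).
rewrite [X in c ^+ X](_ : _ = \sum_i m i)%N; last exact: mdegE.
by under eq_bigr do rewrite exprMn; rewrite big_split /= prodrXr.
Qed.

Lemma mulmx_colE (R : pzSemiRingType) m n (u : 'M[R]_(m, n)) (M : 'M_n) i j :
  (u *m col j M) i 0 = (u *m M) i j.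
Proof. by rewrite !mxE; apply: eq_bigr => k _; rewrite mxE. Qed.

Section LinearAlgebra.
Variables (F : fieldType) (n : nat).

Definition rowv (x : 'I_n -> F) : 'rV[F]_n := \row_i x i.

Definition linear_form (A : 'cV[F]_n) : {mpoly F[n]} := \sum_i A i 0 *: 'X_i.

Lemma linear_formE A x : (linear_form A).@[x] = (rowv x *m A) 0 0.
Proof.
rewrite /linear_form (big_morph _ (mevalD x) (meval0 x)) !mxE.
by apply: eq_bigr => i _; rewrite mevalZ mevalXU mxE mulrC.
Qed.

Lemma linear_form_homog A : linear_form A \is 1.-homog.
Proof.
apply: rpred_sum => i _; apply: dhomogZ.
by rewrite dhomogX; apply/eqP; exact: mdeg1.
Qed.

Lemma exists_dual (p q : 'rV[F]_n) : ~~ (p <= q)%MS ->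
  exists A : 'cV[F]_n, (p *m A) 0 0 = 1 /\ (q *m A) 0 0 = 0.
Proof.
rewrite submxE => /eqP /rowP /not_all_ex_not [j /eqP hj]; rewrite [X in _ != X]mxE in hj.
set C := cokermx q; exists (((p *m C) 0 j)^-1 *: col j C).
rewrite -!scalemxAr; split; rewrite mxE mulmx_colE; first exact: mulVf.
by rewrite mulmx_coker [X in _ * X]mxE mulr0.
Qed.

Lemma sub_line_coord (p q x : 'rV[F]_n) (A B : 'cV[F]_n) :
  (p *m A) 0 0 = 1 -> (q *m A) 0 0 = 0 ->
  (p *m B) 0 0 = 0 -> (q *m B) 0 0 = 1 ->
  (x <= p + q)%MS -> x = (x *m A) 0 0 *: p + (x *m B) 0 0 *: q.
Proof.
move=> pA qA pB qB /sub_addsmxP [[u v] /= ->].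
rewrite [u]mx11_scalar [v]mx11_scalar !mul_scalar_mx !mulmxDl -!scalemxAl.
have e11 (a b : F) (M N : 'M[F]_1) : (a *: M + b *: N) 0 0 = a * M 0 0 + b * N 0 0.
  by rewrite !mxE.
by rewrite !e11 pA qA pB qB !mulr1 !mulr0 addr0 add0r.
Qed.

Lemma rV_sub_sym (u v : 'rV[F]_n) : u != 0 -> (u <= v)%MS -> (v <= u)%MS.
Proof.
move=> u0 uv; have v0 : v != 0.
  by apply: contraNneq u0 => v0; move: uv; rewrite v0 => /submx0null ->.
by have [_ <-] := mxrank_leqif_sup uv; rewrite !rank_rV u0 v0.
Qed.

Lemma rank_addsmx_rV (u v : 'rV[F]_n) :
  u != 0 -> ~~ (v <= u)%MS -> (2 <= \rank (u + v))%N.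
Proof.
move=> u0; rewrite ltnNge; apply: contra => r1.
have [le_u E] := mxrank_leqif_sup (addsmxSl u v).
by apply: submx_trans (addsmxSr u v) _; rewrite -E eqn_leq le_u rank_rV u0.
Qed.

Lemma rank_le1_row_sub m (M : 'M[F]_(m, n)) i0 :
  (\rank M <= 1)%N -> row i0 M != 0 -> (M <= row i0 M)%MS.
Proof.
move=> r1 nz; have [le E] := mxrank_leqif_sup (row_sub i0 M).
by rewrite -E eqn_leq le rank_rV nz.
Qed.

End LinearAlgebra.

Section BinaryForms.
Variables (F : fieldType) (n : nat).

Definition line_restr (h : {mpoly F[n]}) (p q : 'I_n -> F) : {poly F} :=
  \sum_(m <- msupp h) h@_m *: \prod_i (p i *: 'X + (q i)%:P) ^+ m i.

Lemma line_restrE h p q t : (line_restr h p q).[t] = h.@[fun i => t * p i + q i].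
Proof.
rewrite /line_restr mevalE horner_sum; apply: eq_bigr => m _.
rewrite hornerZ horner_prod; congr (_ * _); apply: eq_bigr => i _.
by rewrite horner_exp !hornerE mulrC.
Qed.

Lemma meval_line_restr (h : {mpoly F[n]}) d (p q x : 'I_n -> F) a b :
  h \is d.-homog -> b != 0 -> rowv x = a *: rowv p + b *: rowv q ->
  h.@[x] = b ^+ d * (line_restr h p q).[a / b].
Proof.
move=> hd b0 /rowP xE; rewrite line_restrE -(meval_dhomog_scale _ _ hd).
by apply: meval_eq => i; move: (xE i); rewrite !mxE => ->; field.
Qed.

Definition homogenize (P : {poly F}) (u v : {mpoly F[n]}) : {mpoly F[n]} :=
  \sum_(k < (size P).-1.+1) P`_k *: (u ^+ k * v ^+ ((size P).-1 - k)).

Lemma homogenize_homog P u v :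
  u \is 1.-homog -> v \is 1.-homog -> homogenize P u v \is (size P).-1.-homog.
Proof.
move=> hu hv; apply: rpred_sum => k _; apply: dhomogZ.
have := dhomogM (dhomogMn k hu) (dhomogMn ((size P).-1 - k) hv).
by rewrite !mul1n subnKC // -ltnS.
Qed.

Lemma meval_homogenize P u v x : (homogenize P u v).@[x] =
  \sum_(k < (size P).-1.+1) P`_k * u.@[x] ^+ k * v.@[x] ^+ ((size P).-1 - k).
Proof.
rewrite /homogenize (big_morph _ (mevalD x) (meval0 x)); apply: eq_bigr => k _.
by rewrite mevalZ mevalM !rmorphXn mulrA.
Qed.

Lemma meval_homogenize_lead P u v x :
  u.@[x] = 1 -> v.@[x] = 0 -> (homogenize P u v).@[x] = lead_coef P.
Proof.
move=> u1 v0; rewrite meval_homogenize u1 v0 big_ord_recr /= subnn expr0 expr1n !mulr1.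
rewrite big1 ?add0r ?lead_coefE // => k _.
by rewrite expr0n subn_eq0 leqNgt ltn_ord mulr0.
Qed.

Lemma meval_homogenize_root P u v x :
  v.@[x] != 0 -> P.[u.@[x] / v.@[x]] = 0 -> (homogenize P u v).@[x] = 0.
Proof.
have [-> _ _|P0 v0] := eqVneq P 0.
  by rewrite meval_homogenize size_poly0 big_ord1 coef0 !mul0r.
have sP : size P = (size P).-1.+1 by rewrite prednK // size_poly_gt0.
rewrite horner_coef meval_homogenize; move: (size P).-1 sP => d -> Pt.
transitivity (v.@[x] ^+ d * \sum_(k < d.+1) P`_k * (u.@[x] / v.@[x]) ^+ k).
  rewrite big_distrr /=; apply: eq_bigr => k _.
  have le_k : (k <= d)%N by rewrite -ltnS.
  have -> : v.@[x] ^+ d = v.@[x] ^+ k * v.@[x] ^+ (d - k) by rewrite -exprD subnKC.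
  rewrite expr_div_n; field; exact: expf_neq0.
by rewrite Pt mulr0.
Qed.

End BinaryForms.

Lemma nonzero4_rowv x : nonzero4 x <-> rowv x != 0.
Proof.
split=> [[i xi] | /eqP x0].
  by apply: contra xi => /eqP /rowP /(_ i); rewrite !mxE => ->.
have /not_all_ex_not [i xi] : ~ (forall i, rowv x 0 i = (0 : 'rV_4) 0 i).
  by move/rowP.
by exists i; apply/eqP; rewrite !mxE in xi.
Qed.

Lemma proj_closed_sub_point (Y : pset) p x :
  proj_closed Y -> Y p -> nonzero4 x -> (rowv x <= rowv p)%MS -> Y x.
Proof.
move=> [S [homS hY]] /hY [_ Sp] nzx /submxP [D].
rewrite [D]mx11_scalar mul_scalar_mx => /rowP xE.
apply/hY; split=> // h Sh; have [d hd] := homS h Sh.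
rewrite -(mulr0 (D 0 0 ^+ d)) -(Sp h Sh) -meval_dhomog_scale //.
by apply: meval_eq => i; move: (xE i); rewrite !mxE.
Qed.

Lemma proj_irred_split (Y : pset) u v :
  proj_irred Y -> (exists d, u \is d.-homog) -> (exists e, v \is e.-homog) ->
  (forall x, Y x -> u.@[x] = 0 \/ v.@[x] = 0) ->
  (forall x, Y x -> u.@[x] = 0) \/ (forall x, Y x -> v.@[x] = 0).
Proof.
move=> [[S [homS hY]] _ irrY] hu hv Yuv.
pose cut w : pset := fun x => nonzero4 x /\ forall s, S s \/ s = w -> s.@[x] = 0.
have cut_closed w : (exists d, w \is d.-homog) -> proj_closed (cut w).
  by move=> hw; exists (fun s => S s \/ s = w); split=> // s [/homS | ->].
have cutP w x : cut w x -> Y x /\ w.@[x] = 0.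
  case=> nzx Sw; split; last by apply: Sw; right.
  by apply/hY; split=> // s Ss; apply: Sw; left.
have Y_cut x : Y x <-> cut u x \/ cut v x.
  split=> [Yx | [/cutP [] | /cutP []] //].
  have [nzx S0] := proj1 (hY x) Yx.
  by case: (Yuv x Yx) => [ux | vx]; [left | right]; split=> // s [/S0 | ->].
have [] := irrY _ _ (cut_closed u hu) (cut_closed v hv) Y_cut => Ycut;
  [left | right] => x /Ycut /cutP [] //.
Qed.

(* A closed Y inside the line pq is cut out on it by a binary form; splitting
   the zero p of that form (where B = 0) from its other zeros (where g = 0)
   writes Y as the union of two closed subsets missing q and p respectively. *)
Lemma proj_irred_line (Y : pset) p q :
  proj_irred Y -> Y p -> Y q -> ~~ (rowv q <= rowv p)%MS ->
  (forall x, Y x -> (rowv x <= rowv p + rowv q)%MS) ->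
  forall r, nonzero4 r -> (rowv r <= rowv p + rowv q)%MS -> Y r.
Proof.
move=> irrY Yp Yq nqp Yline r nzr rline; apply: NNPP => nYr.
have [clY _ _] := irrY; have [S [homS hY]] := clY.
have nzp : rowv p != 0 by apply/nonzero4_rowv; case/hY: Yp.
have npq : ~~ (rowv p <= rowv q)%MS by apply: contra nqp; exact: rV_sub_sym.
have [A [pA qA]] := exists_dual npq; have [B [qB pB]] := exists_dual nqp.
have coord x (xl : (rowv x <= rowv p + rowv q)%MS) := sub_line_coord pA qA pB qB xl.
have [h [Sh hr]] : exists h, S h /\ h.@[r] != 0.
  apply: NNPP => nh; apply: nYr; apply/hY; split=> // s Ss.
  by apply: NNPP => /eqP sr; apply: nh; exists s.
have [d hd] := homS h Sh; set P := line_restr h p q.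
have ev x : (rowv x <= rowv p + rowv q)%MS -> (rowv x *m B) 0 0 != 0 ->
    h.@[x] = (rowv x *m B) 0 0 ^+ d * P.[(rowv x *m A) 0 0 / (rowv x *m B) 0 0].
  by move=> xl Bx; apply: meval_line_restr hd Bx (coord x xl).
have Br : (rowv r *m B) 0 0 != 0.
  apply: contra_notN nYr => /eqP Br; apply: proj_closed_sub_point clY Yp nzr _.
  by rewrite (coord r rline) Br scale0r addr0 scalemx_sub.
have P0 : P != 0 by apply: contra_neq hr => P0; rewrite ev // P0 horner0 mulr0.
set g := homogenize P (linear_form A) (linear_form B).
have Ysplit x : Y x -> (linear_form B).@[x] = 0 \/ g.@[x] = 0.
  move=> Yx; have [Bx | Bx] := eqVneq (linear_form B).@[x] 0; [by left | right].
  apply: meval_homogenize_root => //; have /hY [_ S0] := Yx.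
  move: (S0 h Sh); rewrite !linear_formE in Bx *; rewrite ev ?Yline //.
  by move/eqP; rewrite mulf_eq0 expf_eq0 (negbTE Bx) andbF => /eqP.
have homB : exists e, linear_form B \is e.-homog.
  by exists 1%N; exact: linear_form_homog.
have homg : exists e, g \is e.-homog.
  by eexists; apply: homogenize_homog; exact: linear_form_homog.
have [/(_ q Yq) | /(_ p Yp)] := proj_irred_split irrY homB homg Ysplit.
  by rewrite linear_formE qB => /eqP; rewrite oner_eq0.
rewrite meval_homogenize_lead ?linear_formE // => /eqP.
by rewrite lead_coef_eq0 (negbTE P0).
Qed.

Lemma not_pinclP (Z1 Z2 : pset) : ~ pincl Z1 Z2 -> exists2 x, Z1 x & ~ Z2 x.
Proof.
move=> nZ12; apply: NNPP => nx; apply: nZ12 => x Z1x.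
by apply: NNPP => nZ2x; apply: nx; exists x.
Qed.

Definition pkernel (M : 'M[CC]_4) : pset := fun x => nonzero4 x /\ rowv x *m M = 0.

Lemma pkernel_closed M : proj_closed (pkernel M).
Proof.
exists (fun s => exists j, s = linear_form (col j M)); split.
  by move=> s [j ->]; exists 1%N; exact: linear_form_homog.
move=> x; split=> [[nzx xM] | [nzx S0]].
  by split=> // s [j ->]; rewrite linear_formE mulmx_colE xM mxE.
split=> //; apply/rowP => j; rewrite [RHS]mxE.
by have := S0 _ (ex_intro _ j erefl); rewrite linear_formE mulmx_colE.
Qed.

Lemma pkernel_dim M : (2 <= \rank M)%N -> proj_dim_le (pkernel M) 1.
Proof.
move=> rM [Y [irrY chain]].
have [[cl0 [p Y0p] _] _] := irrY 0%N isT.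
have [irr1 sub1] := irrY 1%N isT; have [_ sub2] := irrY 2%N isT.
have [inc01 /not_pinclP [q Y1q nY0q]] := chain 0%N isT.
have [_ /not_pinclP [r Y2r nY1r]] := chain 1%N isT.
have Y1p := inc01 p Y0p.
have [[nzp pM] [nzq qM]] := (sub1 p Y1p, sub1 q Y1q).
have nqp : ~~ (rowv q <= rowv p)%MS.
  by apply: contra_notN nY0q; exact: proj_closed_sub_point cl0 Y0p nzq.
have ker_line : (kermx M <= rowv p + rowv q)%MS.
  have pqK : (rowv p + rowv q <= kermx M)%MS.
    by rewrite addsmx_sub !sub_kermx pM qM eqxx.
  have [_ <-] := mxrank_leqif_sup pqK; rewrite eqn_leq mxrankS //= mxrank_ker.
  apply: leq_trans (rank_addsmx_rV _ nqp); last exact/nonzero4_rowv.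
  by rewrite leq_subLR addn2.
have Kline x : pkernel M x -> (rowv x <= rowv p + rowv q)%MS.
  by case=> _ xM; apply: submx_trans ker_line; rewrite sub_kermx xM.
have Y1line x : Y 1%N x -> (rowv x <= rowv p + rowv q)%MS by move/sub1/Kline.
have [nzr _] := sub2 r Y2r.
exact: nY1r (proj_irred_line irr1 Y1p Y1q nqp Y1line nzr (Kline r (sub2 r Y2r))).
Qed.

Lemma pkernel_codim_ge2 M : (2 <= \rank M)%N -> codim_ge2 (pkernel M).
Proof. by move=> rM; split; [exact: pkernel_closed | exact: pkernel_dim]. Qed.

Section Representation.
Variable R : rep141.

Definition fmx : 'M[CC]_4 := \matrix_(i, k) rf R i 0 k.
Definition gmx : 'M[CC]_4 := \matrix_(i, k) rg R i k 0.

Lemma row_fmx i : row i fmx = rf R i.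
Proof. by apply/rowP => k; rewrite !mxE. Qed.

Lemma col_tr_gmx i : col i gmx^T = rg R i.
Proof. by apply/colP => k; rewrite !mxE. Qed.

Lemma fsumE lam : fsum R lam = rowv lam *m fmx.
Proof.
by apply/rowP => k; rewrite /fsum summxE !mxE; apply: eq_bigr => i _; rewrite !mxE.
Qed.

Lemma gsumE lam : (gsum R lam)^T = rowv lam *m gmx.
Proof.
by apply/rowP => k; rewrite /gsum !mxE summxE; apply: eq_bigr => i _; rewrite !mxE.
Qed.

Lemma loc_inj_rank : (2 <= \rank fmx)%N -> loc_inj R.
Proof.
move=> rF; exists (pkernel fmx); split; first exact: pkernel_codim_ge2.
move=> lam nzl nK; rewrite fsumE /row_free rank_rV.
by have -> : rowv lam *m fmx != 0 by apply/eqP => lF; exact: nK.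
Qed.

Lemma loc_surj_rank : (2 <= \rank gmx)%N -> loc_surj R.
Proof.
move=> rG; exists (pkernel gmx); split; first exact: pkernel_codim_ge2.
move=> lam nzl nK; rewrite /row_full -mxrank_tr gsumE rank_rV.
by have -> : rowv lam *m gmx != 0 by apply/eqP => lG; exact: nK.
Qed.

Lemma rf_rg_diag i : rf R i *m rg R i = 0.
Proof.
have := rrel R i i; rewrite -mulr2n -scaler_nat => /eqP.
by rewrite scaler_eq0 pnatr_eq0 => /eqP.
Qed.

Lemma rf_rg_eq0_of_fmx : (\rank fmx <= 1)%N -> forall i j, rf R i *m rg R j = 0.
Proof.
move=> r1 i j; have [[i0 nz] | all0] := classic (exists i0, rf R i0 != 0); last first.
  have -> : rf R i = 0 by apply/eqP; apply: contra_notT all0 => nz; exists i.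
  exact: mul0mx.
have fsub k : exists D : 'M_1, rf R k = D *m rf R i0.
  apply/submxP; rewrite -!row_fmx; apply: submx_trans (row_sub k fmx) _.
  by apply: rank_le1_row_sub r1 _; rewrite row_fmx.
have f0g l : rf R i0 *m rg R l = 0.
  have [D Dl] := fsub l; have := rrel R l i0.
  by rewrite Dl -mulmxA rf_rg_diag mulmx0 addr0.
by have [D ->] := fsub i; rewrite -mulmxA f0g mulmx0.
Qed.

Lemma rf_rg_eq0_of_gmx : (\rank gmx <= 1)%N -> forall i j, rf R i *m rg R j = 0.
Proof.
move=> r1 i j; have [[i0 nz] | all0] := classic (exists i0, rg R i0 != 0); last first.
  have -> : rg R j = 0 by apply/eqP; apply: contra_notT all0 => nz; exists j.
  exact: mulmx0.
have gsub k : exists D : 'M_1, rg R k = rg R i0 *m D.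
  have row_gmx l : row l gmx = (rg R l)^T by rewrite -col_tr_gmx tr_col trmxK.
  have /submxP [D Dk] : (row k gmx <= row i0 gmx)%MS.
    apply: submx_trans (row_sub k gmx) _.
    by apply: rank_le1_row_sub r1 _; rewrite row_gmx trmx_eq0.
  by exists D^T; rewrite -[rg R k]trmxK -row_gmx Dk trmx_mul row_gmx trmxK.
have fg0 l : rf R l *m rg R i0 = 0.
  have [D Dl] := gsub l; have := rrel R i0 l.
  by rewrite Dl mulmxA rf_rg_diag mul0mx addr0.
by have [D ->] := gsub j; rewrite mulmxA fg0 mul0mx.
Qed.

Lemma kermx_gmx_subrep :
  (forall i j, rf R i *m rg R j = 0) -> is_subrep R 1%:M (kermx gmx^T) 0.
Proof.
move=> fg0 i; rewrite mul1mx sub_kermx submx0; split; apply/eqP.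
  by apply/rowP => j; rewrite -mulmx_colE col_tr_gmx fg0 !mxE.
by apply/colP => k; rewrite -col_tr_gmx mulmx_colE mulmx_ker !mxE.
Qed.

End Representation.

Lemma theta_stable_signs th R : theta_stable th R -> 0 < th.1.1 /\ th.2 < 0.
Proof.
case; rewrite /theta_dot /= => th0 st.
have one_neq0 : (1%:M : 'M[CC]_1) != 0 by rewrite -mxrank_eq0 mxrank1.
have test W0 : is_subrep R 0 W0 1%:M ->
    th.1.2 * (\rank W0)%:R + th.2 < 0.
  move=> sub; have := st _ _ _ sub; rewrite /theta_dot /= mxrank0 mxrank1.
  rewrite mulr0 add0r mulr1; apply.
    by case=> _ _ /eqP; rewrite (negbTE one_neq0).
  by case; rewrite submx0 (negbTE one_neq0).
have c_lt0 : th.2 < 0.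
  by have := test 0; rewrite mxrank0 mulr0 add0r; apply=> i; rewrite !mul0mx !sub0mx.
have : th.1.2 * 4%:R + th.2 < 0.
  by have := test 1%:M; rewrite mxrank1; apply=> i; rewrite mul0mx sub0mx submx1.
by split=> //; lra.
Qed.

Lemma theta_stable_no_source_subrep th R W0 :
  theta_stable th R -> ~ is_subrep R 1%:M W0 0.
Proof.
move=> st sub; have [a_gt0 c_lt0] := theta_stable_signs st.
have one_neq0 : (1%:M : 'M[CC]_1) != 0 by rewrite -mxrank_eq0 mxrank1.
case: st => th0 /(_ _ _ _ sub); rewrite /theta_dot /= in th0 *.
rewrite mxrank0 mxrank1 mulr0 addr0 mulr1 => lt0.
have {}lt0 : th.1.1 + th.1.2 * (\rank W0)%:R < 0.
  apply: lt0; first by case=> /eqP; rewrite (negbTE one_neq0).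
  by case=> _ _; rewrite submx0 (negbTE one_neq0).
have : (\rank W0)%:R <= 4%:R :> RR by rewrite ler_nat rank_leq_col.
have : 0 <= (\rank W0)%:R :> RR by [].
move: (\rank W0)%:R lt0 => k lt0 k_ge0 k_le4; nra.
Qed.

Theorem mainTheorem11 (R : rep141) :
  (glob_surj R /\ ~ loc_inj R) \/ (glob_inj R /\ ~ loc_surj R) ->
  forall alpha gamma : RR,
    ~ theta_stable (alpha, - (alpha + gamma) / 4, gamma) R.
Proof.
move=> hR alpha gamma /theta_stable_no_source_subrep nsub.
apply: nsub (kermx_gmx_subrep _).
case: hR => [[_ nli] | [_ nls]].
  by apply: rf_rg_eq0_of_fmx; rewrite leqNgt; apply/negP => /loc_inj_rank.
by apply: rf_rg_eq0_of_gmx; rewrite leqNgt; apply/negP => /loc_surj_rank.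
Qed.
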